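(* In a hierarchical tensor factorization with mode tree $\mathcal T$ and end tensor $\mathcal W_H$, let $\nu\in\mathrm{int}(\mathcal T)$ and $r\in[R_\nu]$, and let $\overline{\mathcal W}_H^{(\nu,r)}$ be the end tensor obtained by setting the $r$'th row of $W^{(\nu)}$ and the $r$'th columns of $W^{(\nu_c)}$, $\nu_c\in C(\nu)$, to zero (all other entries unchanged). Then $$\|\mathcal W_H-\overline{\mathcal W}_H^{(\nu,r)}\|\le\sigma_{\nu,r}\cdot\prod_{\nu'\in\mathcal T\setminus(\{\nu\}\cup C(\nu))}\|W^{(\nu')}\|.$$
   Context: Fix $N\in\mathbb N$, $D_1,\dots,D_N\in\mathbb N$; $[K]:=\{1,\dots,K\}$; norms are Frobenius norms; $\otimes$ the tensor product. A mode tree $\mathcal T$ over $[N]$ is a rooted tree whose nodes are labeled by subsets of $[N]$, with exactly $N$ leaves labeled $\{1\},\dots,\{N\}$, and where each interior node's label is the union of its children's labels; nodes are identified with labels, root $[N]$, $\mathrm{int}(\mathcal T)$ interior nodes, $Pa(\nu)$ parent, $C(\nu)$ children (fixed order). A hierarchical tensor factorization has $R_\nu\in\mathbb N$ ($\nu\in\mathrm{int}(\mathcal T)$), $R_{Pa([N])}:=1$, $R_{\{n\}}:=D_n$, weight matrices $W^{(\nu)}\in\mathbb R^{R_\nu\times R_{Pa(\nu)}}$. Intermediate tensors: $\mathcal W^{(\{n\},r)}:=W^{(\{n\})}_{:,r}$; for $\nu\in\mathrm{int}(\mathcal T)\setminus\{[N]\}$ (leaves to root), $r\in[R_{Pa(\nu)}]$: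 $\mathcal W^{(\nu,r)}:=\pi_\nu\big(\sum_{r'=1}^{R_\nu}W^{(\nu)}_{r',r}\bigotimes_{\nu_c\in C(\nu)}\mathcal W^{(\nu_c,r')}\big)$; end tensor $\mathcal W_H:=\pi_{[N]}\big(\sum_{r'=1}^{R_{[N]}}W^{([N])}_{r',1}\bigotimes_{\nu_c\in C([N])}\mathcal W^{(\nu_c,r')}\big)$, where $\pi_\nu$ permutes modes (ordered by children, each child's elements ascending) into ascending order of the elements of $\nu$. $\sigma_{\nu,r}:=\|W^{(\nu)}_{r,:}\|\prod_{\nu_c\in C(\nu)}\|W^{(\nu_c)}_{:,r}\|$ is the norm of the $(\nu,r)$'th local component. *)

From HB Require Import structures.
From mathcomp Require Import all_boot all_order all_algebra.
Set Implicit Arguments. Unset Strict Implicit. Unset Printing Implicit Defensive.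
Import Order.TTheory GRing.Theory Num.Theory.
Local Open Scope ring_scope.

(* Modes are 'I_N = {0,...,N-1} (the paper's [N] shifted by one).
   A mode tree is represented by its set of node labels (nodes are
   identified with their labels in the paper). *)

Definition is_mode_tree (N : nat) (T : {set {set 'I_N}}) : bool :=
  [&& [set: 'I_N] \in T,
      [forall n : 'I_N, [set n] \in T],
      set0 \notin T &
      [forall A in T, forall B in T,
         [|| A \subset B, B \subset A | [disjoint A & B]]]].

Definition children (N : nat) (T : {set {set 'I_N}}) (nu : {set 'I_N}) :
  {set {set 'I_N}} :=
  [set c in T | (c \proper nu) &&
     [forall c' in T, ~~ ((c \proper c') && (c' \proper nu))]].

Definition parent_of (N : nat) (T : {set {set 'I_N}}) (nu : {set 'I_N}) :
  option {set 'I_N} := [pick p in T | nu \in children T p].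

Definition leaf_of (N : nat) (nu : {set 'I_N}) : option 'I_N :=
  [pick n : 'I_N | nu == [set n]].

Definition interior (N : nat) (T : {set {set 'I_N}}) (nu : {set 'I_N}) : bool :=
  (nu \in T) && (leaf_of nu == None).

Definition idx (N : nat) (D : 'I_N -> nat) := {dffun forall n : 'I_N, 'I_(D n)}.

Definition rank (N : nat) (D : 'I_N -> nat) (Rk : {set 'I_N} -> nat)
  (nu : {set 'I_N}) : nat :=
  if leaf_of nu is Some n then D n else Rk nu.

Definition prank (N : nat) (D : 'I_N -> nat) (T : {set {set 'I_N}})
  (Rk : {set 'I_N} -> nat) (nu : {set 'I_N}) : nat :=
  if parent_of T nu is Some p then rank D Rk p else 1%N.

(* Intermediate tensors W^(nu,r), in coordinates, as functions of the full
   multi-index (depending only on the coordinates in nu).  With this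
   encoding the mode permutation pi_nu is the identity and the tensor
   product of the children tensors (on disjoint mode sets) is the pointwise
   product.  k is fuel (any k >= #|nu| gives the true value). Weight matrices
   are W nu : nat -> nat -> R, only entries (i,j) with
   i < rank nu, j < prank nu being meaningful. *)
Fixpoint itens (N : nat) (R : nzRingType) (D : 'I_N -> nat)
  (T : {set {set 'I_N}}) (Rk : {set 'I_N} -> nat)
  (W : {set 'I_N} -> nat -> nat -> R)
  (k : nat) (nu : {set 'I_N}) (r : nat) (i : idx D) : R :=
  if k is k'.+1 then
    if leaf_of nu is Some n then W nu (nat_of_ord (i n)) r
    else \sum_(r' < Rk nu)
           W nu r' r * \prod_(c in children T nu) itens T Rk W k' c r' i
  else 0.

(* the end tensor W_H (root [N], column index 1 of the R_[N] x 1 matrix) *)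
Definition end_tensor (N : nat) (R : nzRingType) (D : 'I_N -> nat)
  (T : {set {set 'I_N}}) (Rk : {set 'I_N} -> nat)
  (W : {set 'I_N} -> nat -> nat -> R) : idx D -> R :=
  itens T Rk W N [set: 'I_N] 0%N.

Definition tnorm (N : nat) (R : rcfType) (D : 'I_N -> nat) (t : idx D -> R) : R :=
  Num.sqrt (\sum_(i : idx D) t i ^+ 2).

Definition wnorm (N : nat) (R : rcfType) (D : 'I_N -> nat)
  (T : {set {set 'I_N}}) (Rk : {set 'I_N} -> nat)
  (W : {set 'I_N} -> nat -> nat -> R) (nu : {set 'I_N}) : R :=
  Num.sqrt (\sum_(i < rank D Rk nu) \sum_(j < prank D T Rk nu) W nu i j ^+ 2).

Definition row_norm (N : nat) (R : rcfType) (D : 'I_N -> nat)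
  (T : {set {set 'I_N}}) (Rk : {set 'I_N} -> nat)
  (W : {set 'I_N} -> nat -> nat -> R) (nu : {set 'I_N}) (r : nat) : R :=
  Num.sqrt (\sum_(j < prank D T Rk nu) W nu r j ^+ 2).

Definition col_norm (N : nat) (R : rcfType) (D : 'I_N -> nat)
  (Rk : {set 'I_N} -> nat)
  (W : {set 'I_N} -> nat -> nat -> R) (nu : {set 'I_N}) (r : nat) : R :=
  Num.sqrt (\sum_(i < rank D Rk nu) W nu i r ^+ 2).

Definition sigma_loc (N : nat) (R : rcfType) (D : 'I_N -> nat)
  (T : {set {set 'I_N}}) (Rk : {set 'I_N} -> nat)
  (W : {set 'I_N} -> nat -> nat -> R) (nu : {set 'I_N}) (r : nat) : R :=
  row_norm D T Rk W nu r * \prod_(c in children T nu) col_norm D Rk W c r.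

Definition zero_comp (N : nat) (R : nzRingType) (T : {set {set 'I_N}})
  (W : {set 'I_N} -> nat -> nat -> R) (nu : {set 'I_N}) (r : nat) :
  {set 'I_N} -> nat -> nat -> R :=
  fun mu i j => if ((mu == nu) && (i == r)) || ((mu \in children T nu) && (j == r))
                then 0 else W mu i j.

From HB Require Import structures.
From mathcomp Require Import all_boot all_order all_algebra ring.
Set Implicit Arguments. Unset Strict Implicit. Unset Printing Implicit Defensive.
Import Order.TTheory GRing.Theory Num.Theory.
Local Open Scope ring_scope.

(* Average over a uniformly random multi-index.  The tensor of a node depends only
   on the coordinates in its label, and sibling labels are disjoint, so the mean of
   a product of sibling tensors is the product of their means.  At a node,
   Cauchy-Schwarz then bounds the mean square of W^(mu,q) by the squared norm of
   column q of W^(mu) times the product over the children of their summed mean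
   squares; by induction, the summed mean square of a subtree is at most the product
   of its squared weight norms divided by the dimensions of its leaves.  Only the
   weights of nu and of its children change, so at nu the difference of the two
   tensors is the (nu,r)'th local component, and at every strict ancestor only the
   child on the path to nu carries a difference.  The same induction along that path
   bounds the mean square of W_H - Wbar_H by sigma_{nu,r}^2 times the squared norms
   of the other weights, divided by the number of multi-indices. *)

Lemma leaf_ofP (N : nat) (x : {set 'I_N}) n : leaf_of x = Some n -> x = [set n].
Proof. by rewrite /leaf_of; case: pickP => // m /eqP xm [<-]. Qed.

Lemma leaf_of_set1 (N : nat) (n : 'I_N) : leaf_of [set n] = Some n.
Proof.
rewrite /leaf_of; case: pickP => [m /eqP/set1_inj -> // | none].
by have := none n; rewrite eqxx.
Qed.

Section ModeTree.
Variables (N : nat) (T : {set {set 'I_N}}).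
Hypothesis T_tree : is_mode_tree T.
Implicit Types (x y z mu c : {set 'I_N}) (n : 'I_N).

Lemma mode_tree_laminar x y : x \in T -> y \in T ->
  [|| x \subset y, y \subset x | [disjoint x & y]].
Proof.
by move=> xT yT; case/and4P: T_tree => _ _ _ /forall_inP/(_ x xT)/forall_inP->.
Qed.

Lemma root_node : [set: 'I_N] \in T.
Proof. by case/and4P: T_tree. Qed.

Lemma leaf_node n : [set n] \in T.
Proof. by case/and4P: T_tree => _ /forallP. Qed.

Lemma node_neq0 x : x \in T -> x != set0.
Proof. by case/and4P: T_tree => _ _ T0 _ xT; apply: contraNneq T0 => <-. Qed.

Lemma node_not_disjoint x y z : x \in T -> x \subset y -> x \subset z ->
  ~~ [disjoint y & z].
Proof.
move=> /node_neq0/set0Pn[n xn] /subsetP/(_ n xn) yn /subsetP/(_ n xn) zn.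
by apply/negP => /disjointFr/(_ yn); rewrite zn.
Qed.

Lemma child_node c mu : c \in children T mu -> c \in T.
Proof. by rewrite inE => /andP[]. Qed.

Lemma child_proper c mu : c \in children T mu -> c \proper mu.
Proof. by rewrite inE => /and3P[]. Qed.

Lemma child_maximal c mu y : c \in children T mu -> y \in T ->
  c \proper y -> ~~ (y \proper mu).
Proof.
rewrite inE => /and3P[_ _ /forall_inP/(_ y)] max_c yT cy.
by rewrite cy in max_c; apply: max_c.
Qed.

Lemma children_disjoint c c' mu : c \in children T mu -> c' \in children T mu ->
  c != c' -> [disjoint c & c'].
Proof.
move=> cmu c'mu neq; have [cT c'T] := (child_node cmu, child_node c'mu).
case/or3P: (mode_tree_laminar cT c'T) => // sub.
- have cc' : c \proper c' by rewrite properEneq neq sub.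
  by have /negP[] := child_maximal cmu c'T cc'; apply: child_proper c'mu.
- have c'c : c' \proper c by rewrite properEneq eq_sym neq sub.
  by have /negP[] := child_maximal c'mu cT c'c; apply: child_proper cmu.
Qed.

Lemma trivIset_children mu : trivIset (children T mu).
Proof. by apply/trivIsetP => c c'; apply: children_disjoint. Qed.

Lemma exists_child x mu : x \in T -> x \proper mu ->
  exists2 c, c \in children T mu & x \subset c.
Proof.
move=> xT xmu; pose P y := [&& y \in T, x \subset y & y \proper mu].
have [|y /and3P[yT xy ymu] y_max] := @arg_maxnP _ x P (fun y => #|y|).
  by rewrite /P xT subxx.
exists y => //; rewrite inE yT ymu; apply/forall_inP => y' y'T.
apply/negP => /andP[yy' y'mu].
have /y_max : P y' by rewrite /P y'T y'mu (subset_trans xy (proper_sub yy')).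
by rewrite /= leqNgt proper_card.
Qed.

Lemma parent_of_child c mu : mu \in T -> c \in children T mu ->
  parent_of T c = Some mu.
Proof.
move=> muT cmu; rewrite /parent_of; case: pickP => [p /andP[pT cp] | none]; last first.
  by move: (none mu); rewrite /= muT cmu.
congr Some; apply/eqP; apply: contraT => neq.
have cT := child_node cmu.
have [cp_proper cmu_proper] := (child_proper cp, child_proper cmu).
case/or3P: (mode_tree_laminar pT muT) => sub.
- by have /negP[] := child_maximal cmu pT cp_proper; rewrite properEneq neq sub.
- by have /negP[] := child_maximal cp muT cmu_proper; rewrite properEneq eq_sym neq sub.
- by have /negP[] := node_not_disjoint cT (proper_sub cp_proper) (proper_sub cmu_proper).
Qed.

Lemma parent_of_root : parent_of T [set: 'I_N] = None.
Proof.
rewrite /parent_of; case: pickP => // p /andP[_ /child_proper].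
by rewrite properE subsetT andbF.
Qed.

Lemma no_node_proper_leaf x n : x \in T -> ~~ (x \proper [set n]).
Proof.
move=> /node_neq0/set0Pn[m xm]; apply/negP; rewrite properE.
by case/andP=> /subsetP/(_ m xm); rewrite inE => /eqP <-; rewrite sub1set xm.
Qed.

Lemma children_leaf x n : leaf_of x = Some n -> children T x = set0.
Proof.
move/leaf_ofP->; apply/setP => c; rewrite !inE.
by case cT: (c \in T); rewrite //= (negbTE (no_node_proper_leaf n cT)).
Qed.

Lemma nonleaf_of_proper x mu : x \in T -> x \proper mu -> leaf_of mu = None.
Proof.
move=> xT xmu; case mu_leaf: (leaf_of mu) => [n|] //.
by move: xmu; rewrite (leaf_ofP mu_leaf) (negbTE (no_node_proper_leaf n xT)).
Qed.

Lemma nonleaf_child mu : mu \in T -> leaf_of mu = None ->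
  exists c, c \in children T mu.
Proof.
move=> muT mu_nonleaf; have /set0Pn[n mun] := node_neq0 muT.
have n_mu : [set n] \proper mu.
  rewrite properEneq sub1set mun andbT; apply/eqP => n_eq.
  by rewrite -n_eq leaf_of_set1 in mu_nonleaf.
by have [c cmu _] := exists_child (leaf_node n) n_mu; exists c.
Qed.

Lemma big_subtree (M : Type) (idx : M) (op : Monoid.com_law idx)
    (F : {set 'I_N} -> M) mu :
  mu \in T ->
  \big[op/idx]_(x in T | x \subset mu) F x =
  op (F mu) (\big[op/idx]_(c in children T mu) \big[op/idx]_(x in T | x \subset c) F x).
Proof.
move=> muT; rewrite (bigD1 mu) ?muT ?subxx //=; congr (op _ _).
pose child_of x := odflt mu [pick c in children T mu | x \subset c].
have child_of_spec x : x \in T -> x \proper mu ->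
    (child_of x \in children T mu) && (x \subset child_of x).
  move=> xT xmu; have [c cmu xc] := exists_child xT xmu.
  by rewrite /child_of; case: pickP => [c' -> // | /(_ c)]; rewrite cmu xc.
have child_of_unique x c : x \in T -> c \in children T mu -> x \subset c -> child_of x = c.
  move=> xT cmu xc; have xmu := sub_proper_trans xc (child_proper cmu).
  have /andP[tmu xt] := child_of_spec x xT xmu; apply/eqP; apply: contraT => neq.
  by move: (node_not_disjoint xT xt xc); rewrite (children_disjoint tmu cmu neq).
have proper_mu x : x \subset mu -> x != mu -> x \proper mu.
  by move=> xsub xneq; rewrite properEneq xneq.
rewrite (partition_big child_of (mem (children T mu))) => [|x]; last first.
  move=> /andP[/andP[xT xsub] xneq].
  by have /andP[] := child_of_spec x xT (proper_mu x xsub xneq).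
apply: eq_bigr => c cmu; apply: eq_bigl => x.
apply/andP/andP => [[/andP[/andP[xT xsub] xneq] /eqP <-] | [xT xc]].
  by have /andP[] := child_of_spec x xT (proper_mu x xsub xneq).
have := sub_proper_trans xc (child_proper cmu); rewrite properEneq => /andP[xneq xsub].
by rewrite xT xsub xneq (child_of_unique x c).
Qed.

End ModeTree.

Section SumInequalities.
Variables (R : realDomainType) (J : finType).

Lemma cauchy_schwarz (a b : J -> R) :
  (\sum_j a j * b j) ^+ 2 <= (\sum_j a j ^+ 2) * (\sum_j b j ^+ 2).
Proof.
set A := \sum_j a j ^+ 2; set B := \sum_j b j ^+ 2; set C := \sum_j a j * b j.
have lagrange : \sum_j \sum_k (a j * b k - a k * b j) ^+ 2 = 2%:R * (A * B - C ^+ 2).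
  have expand j k : (a j * b k - a k * b j) ^+ 2 =
      a j ^+ 2 * b k ^+ 2 + b j ^+ 2 * a k ^+ 2 - 2%:R * (a j * b j) * (a k * b k).
    by ring.
  under eq_bigr do under eq_bigr do rewrite expand.
  under eq_bigr do rewrite sumrB big_split /= -!mulr_sumr -/A -/B -/C.
  by rewrite sumrB big_split /= -!mulr_suml -mulr_sumr -/A -/B -/C; ring.
have : 0 <= \sum_j \sum_k (a j * b k - a k * b j) ^+ 2.
  by do 2![apply: sumr_ge0 => ? _]; apply: sqr_ge0.
by rewrite lagrange pmulr_rge0 ?ltr0n // subr_ge0.
Qed.

Lemma sum_mul_prod_le (I : Type) (s : seq I) (P : pred I) (a : J -> R) (F : I -> J -> R) :
  (forall j, 0 <= a j) -> (forall c j, 0 <= F c j) ->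
  \sum_j a j * \prod_(c <- s | P c) F c j <=
  (\sum_j a j) * \prod_(c <- s | P c) \sum_j F c j.
Proof.
elim: s a => [|c s IH] a a_ge0 F_ge0.
  by under [X in X <= _]eq_bigr do rewrite big_nil mulr1; rewrite big_nil mulr1.
under [X in X <= _]eq_bigr do rewrite big_cons.
rewrite big_cons.
case: (P c); last exact: IH.
under [X in X <= _]eq_bigr do rewrite mulrA.
apply: le_trans (IH _ (fun j => mulr_ge0 (a_ge0 j) (F_ge0 c j)) F_ge0) _.
rewrite mulrA; apply: ler_wpM2r; first by apply: prodr_ge0 => c' _; apply: sumr_ge0.
rewrite mulr_suml; apply: ler_sum => j _; rewrite mulr_sumr (bigD1 j) //= lerDl.
by apply: sumr_ge0 => k _; apply: mulr_ge0.
Qed.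

Lemma sum_prod_le_prod_sum (I : finType) (S : {set I}) c0 (F : I -> J -> R) :
  c0 \in S -> (forall c j, 0 <= F c j) ->
  \sum_j \prod_(c in S) F c j <= \prod_(c in S) \sum_j F c j.
Proof.
move=> c0S F_ge0; rewrite (bigD1 c0) //=; under eq_bigr do rewrite (bigD1 c0) //=.
exact: sum_mul_prod_le.
Qed.

End SumInequalities.

Section Mean.
Variables (N : nat) (D : 'I_N -> nat) (R : realFieldType).
Implicit Types (f g : idx D -> R) (A B : {set 'I_N}).

Definition mean f : R := (\sum_i f i) / #|{: idx D}|%:R.

Definition mean_sq f : R := mean (fun i => f i ^+ 2).

Definition depends_on f A :=
  forall i j : idx D, (forall n, n \in A -> i n = j n) -> f i = f j.

Lemma eq_mean f g : (forall i, f i = g i) -> mean f = mean g.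
Proof. by move=> fg; rewrite /mean (eq_bigr _ (fun i _ => fg i)). Qed.

Lemma eq_mean_sq f g : (forall i, f i = g i) -> mean_sq f = mean_sq g.
Proof. by move=> fg; apply: eq_mean => i; rewrite fg. Qed.

Lemma ler_mean f g : (forall i, f i <= g i) -> mean f <= mean g.
Proof.
by move=> fg; apply: ler_wpM2r; [rewrite invr_ge0 ler0n | apply: ler_sum => i _].
Qed.

Lemma mean_sq_ge0 f : 0 <= mean_sq f.
Proof. by rewrite /mean_sq divr_ge0 ?ler0n ?sumr_ge0 // => i _; apply: sqr_ge0. Qed.

Lemma meanZ a f : mean (fun i => a * f i) = a * mean f.
Proof. by rewrite /mean -mulr_sumr mulrA. Qed.

Lemma mean_sqZ a f : mean_sq (fun i => a * f i) = a ^+ 2 * mean_sq f.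
Proof. by rewrite /mean_sq -meanZ; apply: eq_mean => i; rewrite exprMn. Qed.

Lemma mean_sum (I : Type) (s : seq I) (P : pred I) (F : I -> idx D -> R) :
  mean (fun i => \sum_(k <- s | P k) F k i) = \sum_(k <- s | P k) mean (F k).
Proof. by rewrite /mean exchange_big mulr_suml. Qed.

Lemma depends_on_sub f A B : A \subset B -> depends_on f A -> depends_on f B.
Proof. by move=> /subsetP AB f_A i j ij; apply: f_A => n /AB; apply: ij. Qed.

Variable i0 : idx D.

Let card_neq0 : #|{: idx D}|%:R != 0 :> R.
Proof. by rewrite pnatr_eq0 -lt0n; apply/card_gt0P; exists i0. Qed.

Lemma dim_gt0 n : (0 < D n)%N.
Proof. exact: leq_ltn_trans (ltn_ord (i0 n)). Qed.

Lemma mean_cst a : mean (fun _ => a) = a.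
Proof. by rewrite /mean sumr_const -[_ *+ _]mulr_natr mulfK. Qed.

Lemma sum_mean f : \sum_i f i = mean f * #|{: idx D}|%:R.
Proof. by rewrite /mean divfK. Qed.

Lemma mean_mul f g A : depends_on f A -> depends_on g (~: A) ->
  mean (fun i => f i * g i) = mean f * mean g.
Proof.
move=> f_A g_A.
pose swap (p : idx D * idx D) :=
  ([ffun n => if n \in A then p.1 n else p.2 n] : idx D,
   [ffun n => if n \in A then p.2 n else p.1 n] : idx D).
have swapK : involutive swap.
  by case=> i j; congr pair; apply/ffunP => n; rewrite !ffunE; case: (n \in A).
have prod_sums : (\sum_i f i) * (\sum_j g j) = (\sum_i f i * g i) * #|{: idx D}|%:R.
  rewrite big_distrlr pair_big (reindex_inj (inv_inj swapK)) /=.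
  transitivity (\sum_(p : idx D * idx D) f p.1 * g p.1).
    apply: eq_bigr => -[i j] _; congr (_ * _).
      by apply: f_A => n nA; rewrite ffunE nA.
    by apply: g_A => n; rewrite inE ffunE => /negbTE->.
  rewrite mulr_natr -(pair_big xpredT xpredT (fun i _ => f i * g i)) /= -sumrMnl.
  by apply: eq_bigr => i _; rewrite sumr_const.
by rewrite /mean mulrACA -invfM prod_sums invfM mulrA mulfK.
Qed.

Lemma mean_prod (S : {set {set 'I_N}}) (F : {set 'I_N} -> idx D -> R) :
  trivIset S ->
  (forall c, c \in S -> depends_on (F c) c) ->
  mean (fun i => \prod_(c in S) F c i) = \prod_(c in S) mean (F c).
Proof.
move=> /trivIsetP S_disj F_dep; rewrite -big_enum; under eq_mean do rewrite -big_enum.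
have : {subset enum S <= S} by move=> c; rewrite mem_enum.
elim: (enum S) (enum_uniq (mem S)) => [|c s IH] /=.
  by rewrite big_nil; under eq_mean do rewrite big_nil; rewrite mean_cst.
case/andP=> c_s s_uniq sub_S.
have cS : c \in S by apply: sub_S; rewrite inE eqxx.
have sS : {subset s <= S} by move=> c' c's; apply: sub_S; rewrite inE c's orbT.
rewrite big_cons -IH //; under eq_mean do rewrite big_cons.
apply: mean_mul (F_dep c cS) _ => i j ij; apply: eq_big_seq => c' c's.
have c'c : [disjoint c' & c].
  by apply: S_disj; [exact: sS | exact: cS | apply: contraNneq c_s => <-].
apply: (depends_on_sub _ (F_dep c' (sS c' c's))) ij.
by apply/subsetP => n c'n; rewrite inE (disjointFr c'c c'n).
Qed.

Lemma mean_coord n (h : 'I_(D n) -> R) :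
  mean (fun i => h (i n)) = (\sum_a h a) / (D n)%:R.
Proof.
pose upd (i : idx D) (a : 'I_(D n)) : idx D :=
  [ffun m => if m == n then insubd (i m) (val a) else i m].
have upd_n i a : upd i a n = a.
  by apply: val_inj; rewrite ffunE eqxx insubdK //; apply: ltn_ord.
pose set_n (p : idx D * 'I_(D n)) := (upd p.1 p.2, p.1 n).
have set_nK : involutive set_n.
  case=> i a; rewrite /set_n /= upd_n; congr pair; apply/ffunP => m.
  rewrite !ffunE; case: eqP => [-> | //]; apply: val_inj.
  by rewrite insubdK //; apply: ltn_ord.
have dims : (\sum_(i : idx D) h (i n)) *+ D n = (\sum_a h a) *+ #|{: idx D}|.
  transitivity (\sum_(p : idx D * 'I_(D n)) h (p.1 n)).
    rewrite -(pair_big xpredT xpredT (fun (i : idx D) (_ : 'I_(D n)) => h (i n))) /=.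
    rewrite -sumrMnl.
    by apply: eq_bigr => i _; rewrite sumr_const card_ord.
  rewrite (reindex_inj (inv_inj set_nK)) /=.
  under eq_bigr do rewrite upd_n.
  by rewrite -(pair_big xpredT xpredT (fun (_ : idx D) a => h a)) /= sumr_const.
have Dn_neq0 : (D n)%:R != 0 :> R by rewrite pnatr_eq0 -lt0n dim_gt0.
apply: (mulIf Dn_neq0); rewrite divfK // /mean mulrAC mulr_natr dims.
by rewrite -[(\sum_a h a) *+ _]mulr_natr mulfK.
Qed.

Lemma mean_sq_prod (S : {set {set 'I_N}}) (F : {set 'I_N} -> idx D -> R) :
  trivIset S ->
  (forall c, c \in S -> depends_on (F c) c) ->
  mean_sq (fun i => \prod_(c in S) F c i) = \prod_(c in S) mean_sq (F c).
Proof.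
move=> S_disj F_dep; rewrite /mean_sq; under eq_mean do rewrite -prodrXl.
by apply: mean_prod => // c cS i j ij; rewrite (F_dep c cS i j ij).
Qed.

Lemma mean_sq_sum_prod_le m (a : 'I_m -> R) (S : {set {set 'I_N}}) c0
    (Y : {set 'I_N} -> 'I_m -> idx D -> R) :
  c0 \in S -> trivIset S ->
  (forall c k, c \in S -> depends_on (Y c k) c) ->
  mean_sq (fun i => \sum_k a k * \prod_(c in S) Y c k i) <=
  (\sum_k a k ^+ 2) * \prod_(c in S) \sum_k mean_sq (Y c k).
Proof.
move=> c0S S_disj Y_dep.
apply: (@le_trans _ _
  (mean (fun i => (\sum_k a k ^+ 2) * \sum_k (\prod_(c in S) Y c k i) ^+ 2))).
  by apply: ler_mean => i; apply: cauchy_schwarz.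
rewrite meanZ mean_sum; apply: ler_wpM2l; first by apply: sumr_ge0 => k _; apply: sqr_ge0.
rewrite (eq_bigr (fun k => \prod_(c in S) mean_sq (Y c k))) => [|k _].
  by apply: sum_prod_le_prod_sum c0S _ => c k; apply: mean_sq_ge0.
by rewrite -mean_sq_prod // => c cS; apply: Y_dep.
Qed.

End Mean.

Section NodeBounds.
Variables (N : nat) (R : realFieldType) (D : 'I_N -> nat) (T : {set {set 'I_N}})
  (Rk : {set 'I_N} -> nat) (W : {set 'I_N} -> nat -> nat -> R).
Hypothesis T_tree : is_mode_tree T.
Variable i0 : idx D.
Implicit Types (x mu c d : {set 'I_N}) (V : {set 'I_N} -> nat -> nat -> R).
Local Notation tensor := (@itens _ _ D T Rk).

Lemma itens_leaf V k mu q n (i : idx D) : leaf_of mu = Some n ->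
  tensor V k.+1 mu q i = V mu (i n) q.
Proof. by move=> /= ->. Qed.

Lemma itens_nonleaf V k mu q (i : idx D) : leaf_of mu = None ->
  tensor V k.+1 mu q i =
  \sum_(r' < Rk mu) V mu r' q * \prod_(c in children T mu) tensor V k c r' i.
Proof. by move=> /= ->. Qed.

Lemma itens_depends V k mu q : depends_on (tensor V k mu q) mu.
Proof.
elim: k mu q => [|k IH] mu q i j ij //=.
case mu_leaf: (leaf_of mu) => [n|]; first by rewrite ij // (leaf_ofP mu_leaf) set11.
apply: eq_bigr => r' _; congr (_ * _); apply: eq_bigr => c cmu.
exact: depends_on_sub (proper_sub (child_proper cmu)) (IH c r') i j ij.
Qed.

Definition node_dim x : R := if leaf_of x is Some n then (D n)%:R else 1.

Definition col_sq x q : R := \sum_(a < rank D Rk x) W x a q ^+ 2.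

Definition wsq x : R := \sum_(a < rank D Rk x) \sum_(b < prank D T Rk x) W x a b ^+ 2.

Definition scaled_wsq x : R := wsq x / node_dim x.

Definition subtree_prod (F : {set 'I_N} -> R) x : R := \prod_(y in T | y \subset x) F y.

Lemma subtree_prodE F mu : mu \in T ->
  subtree_prod F mu = F mu * \prod_(c in children T mu) subtree_prod F c.
Proof. exact: big_subtree. Qed.

Lemma node_dim_nonleaf x : leaf_of x = None -> node_dim x = 1.
Proof. by rewrite /node_dim => ->. Qed.

Lemma node_dim_gt0 x : 0 < node_dim x.
Proof. by rewrite /node_dim; case: (leaf_of x) => [n|] //; rewrite ltr0n (dim_gt0 i0). Qed.

Lemma wsq_ge0 x : 0 <= wsq x.
Proof. by do 2![apply: sumr_ge0 => ? _]; apply: sqr_ge0. Qed.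

Lemma prank_child p c : p \in T -> c \in children T p -> leaf_of p = None ->
  prank D T Rk c = Rk p.
Proof.
by move=> pT cp p_nonleaf; rewrite /prank (parent_of_child T_tree pT cp) /rank p_nonleaf.
Qed.

Lemma sum_mean_sq_le_scaled_wsq c (f : nat -> idx D -> R) B :
  (forall q, mean_sq (f q) <= col_sq c q / node_dim c * B) ->
  \sum_(q < prank D T Rk c) mean_sq (f q) <= scaled_wsq c * B.
Proof.
move=> f_le.
apply: (@le_trans _ _ (\sum_(q < prank D T Rk c) col_sq c q / node_dim c * B)).
  by apply: ler_sum => q _; apply: f_le.
by rewrite -!mulr_suml /scaled_wsq /wsq /col_sq exchange_big.
Qed.

Lemma mean_sq_itens_le k c q : c \in T -> (#|c| <= k)%N ->
  mean_sq (tensor W k c q) <=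
  col_sq c q / node_dim c * \prod_(c' in children T c) subtree_prod scaled_wsq c'.
Proof.
elim: k c q => [|k IH] c q cT c_k.
  by move: c_k; rewrite leqn0 cards_eq0 (negbTE (node_neq0 T_tree cT)).
case c_leaf: (leaf_of c) => [n|].
  rewrite (eq_mean_sq (fun i => itens_leaf W k q i c_leaf)) /mean_sq.
  rewrite (mean_coord i0 (fun a : 'I_(D n) => W c a q ^+ 2)) (children_leaf T_tree c_leaf).
  by rewrite big_set0 mulr1 /col_sq /node_dim /rank c_leaf.
have [c0 c0c] := nonleaf_child T_tree cT c_leaf.
rewrite (eq_mean_sq (fun i => itens_nonleaf W k q i c_leaf)).
apply: le_trans (mean_sq_sum_prod_le i0 _ c0c (trivIset_children T_tree c) _) _.
  by move=> c' r' _; apply: itens_depends.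
rewrite /col_sq /rank c_leaf node_dim_nonleaf // divr1.
apply: ler_wpM2l; first by apply: sumr_ge0 => a _; apply: sqr_ge0.
apply: ler_prod => c' c'c; rewrite sumr_ge0 => [|r' _]; last exact: mean_sq_ge0.
have c'T := child_node c'c.
rewrite subtree_prodE // -(prank_child cT c'c c_leaf).
apply: sum_mean_sq_le_scaled_wsq => q'; apply: IH => //.
exact: leq_trans (proper_card (child_proper c'c)) c_k.
Qed.

Lemma sum_mean_sq_itens_le k c : c \in T -> (#|c| <= k)%N ->
  \sum_(q < prank D T Rk c) mean_sq (tensor W k c q) <= subtree_prod scaled_wsq c.
Proof.
move=> cT c_k; rewrite subtree_prodE //.
by apply: sum_mean_sq_le_scaled_wsq => q; apply: mean_sq_itens_le.
Qed.

Lemma prod_node_dim : \prod_(x in T) node_dim x = #|{: idx D}|%:R.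
Proof.
have leaf_dim x : node_dim x = \prod_(n | x == [set n]) (D n)%:R.
  rewrite /node_dim /leaf_of; case: pickP => [n /eqP-> | none].
    by rewrite (big_pred1 n) // => m; rewrite /= eq_sym; apply/eqP/eqP => [/set1_inj|->].
  by rewrite big_pred0.
rewrite (eq_bigr _ (fun x _ => leaf_dim x)) (exchange_big_dep xpredT) //=.
rewrite card_dep_ffun foldrE big_map natr_prod enumT; apply: eq_bigr => n _.
rewrite (big_pred1 [set n]) ?card_ord // => x /=.
by rewrite andb_idl // => /eqP->; apply: leaf_node.
Qed.

Section ComponentRemoval.
Variables (nu : {set 'I_N}) (r : nat).
Hypotheses (nu_interior : interior T nu) (r_lt : (r < Rk nu)%N).
Local Notation W' := (zero_comp T W nu r).

Definition comp_node x := (x == nu) || (x \in children T nu).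

Definition comp_free mu := forall x, x \subset mu -> ~~ comp_node x.

Definition itens_diff k mu q (i : idx D) := tensor W k mu q i - tensor W' k mu q i.

(* The weights of nu and of its children are accounted for by sigma_sq; in the
   subtree bound these nodes only keep their normalisation. *)
Definition del_scaled_wsq x : R := (if comp_node x then 1 else wsq x) / node_dim x.

Definition sigma_sq : R :=
  (\sum_(j < prank D T Rk nu) W nu r j ^+ 2) * \prod_(c in children T nu) col_sq c r.

Let nu_node : nu \in T. Proof. by case/andP: nu_interior. Qed.
Let nu_nonleaf : leaf_of nu = None. Proof. by case/andP: nu_interior => _ /eqP. Qed.

Lemma zero_comp_free x a b : ~~ comp_node x -> W' x a b = W x a b.
Proof. by rewrite /zero_comp => /norP[/negbTE-> /negbTE->]. Qed.

Lemma itens_comp_free k mu q i : comp_free mu -> tensor W' k mu q i = tensor W k mu q i.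
Proof.
elim: k mu q => [|k IH] mu q mu_free //=.
case: (leaf_of mu) => [n|]; first by rewrite zero_comp_free ?mu_free.
apply: eq_bigr => r' _; rewrite zero_comp_free ?mu_free //; congr (_ * _).
apply: eq_bigr => c cmu; apply: IH => x xc; apply: mu_free.
exact: subset_trans xc (proper_sub (child_proper cmu)).
Qed.

Lemma comp_free_grandchild c' c : c' \in children T c -> c \in children T nu ->
  comp_free c'.
Proof.
move=> c'c cnu x xc'; have xc := sub_proper_trans xc' (child_proper c'c).
rewrite negb_or; apply/andP; split.
  by apply: contraTneq (proper_trans xc (child_proper cnu)) => ->; rewrite properxx.
apply/negP => xnu.
have /negP[] := node_not_disjoint T_tree (child_node xnu) (subxx x) (proper_sub xc).
by apply: (children_disjoint T_tree xnu cnu); apply: contraTneq xc => ->; rewrite properxx.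
Qed.

Lemma comp_free_disjoint c d : [disjoint c & d] -> nu \subset d -> comp_free c.
Proof.
move=> cd nud x xc; rewrite negb_or; apply/andP; split.
  apply/eqP => x_nu; rewrite x_nu in xc.
  by have /negP[] := node_not_disjoint T_tree nu_node xc nud.
apply: contraTN cd => xnu.
have xd := subset_trans (proper_sub (child_proper xnu)) nud.
by apply: (node_not_disjoint T_tree (child_node xnu) xc xd).
Qed.

Lemma itens_comp_child k c q i : c \in children T nu -> q != r ->
  tensor W' k c q i = tensor W k c q i.
Proof.
move=> cnu qr.
have W'c a : W' c a q = W c a q.
  rewrite /zero_comp (negbTE qr) andbF orbF; case: eqP => // c_nu.
  by move: (child_proper cnu); rewrite c_nu properxx.
case: k => [|k] //=; case: (leaf_of c) => [n|]; first exact: W'c.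
apply: eq_bigr => r' _; rewrite W'c; congr (_ * _).
by apply: eq_bigr => c' c'c; apply: itens_comp_free; apply: comp_free_grandchild c'c cnu.
Qed.

Lemma itens_diff_nu k q i :
  itens_diff k.+1 nu q i = W nu r q * \prod_(c in children T nu) tensor W k c r i.
Proof.
rewrite /itens_diff !itens_nonleaf // -sumrB (bigD1 (Ordinal r_lt)) //=.
rewrite [X in _ + X]big1 ?addr0 => [|r' r'r].
  by rewrite [W' _ _ _]/zero_comp !eqxx mul0r subr0.
have r'_neq : nat_of_ord r' != r by apply: contraNneq r'r => r'_eq; apply/eqP/val_inj.
have nu_not_child : nu \notin children T nu.
  by apply/negP => /child_proper; rewrite properxx.
have -> : W' nu r' q = W nu r' q.
  by rewrite /zero_comp eqxx (negbTE r'_neq) (negbTE nu_not_child).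
rewrite [X in _ - _ * X](eq_bigr (fun c => tensor W k c r' i)) ?subrr // => c cnu.
exact: itens_comp_child.
Qed.

Lemma itens_diff_depends k mu q : depends_on (itens_diff k mu q) mu.
Proof.
by move=> i j ij; rewrite /itens_diff (itens_depends W k q ij) (itens_depends W' k q ij).
Qed.

Lemma ancestor_not_comp mu : nu \proper mu -> ~~ comp_node mu.
Proof.
move=> nu_mu; rewrite negb_or eq_sym (proper_neq nu_mu); apply/negP => /child_proper mu_nu.
by have := proper_trans mu_nu nu_mu; rewrite properxx.
Qed.

Lemma itens_diff_ancestor k mu cs q i :
  nu \proper mu -> cs \in children T mu -> nu \subset cs ->
  itens_diff k.+1 mu q i =
  \sum_(r' < Rk mu) W mu r' q *
    \prod_(c in children T mu)
      (if c == cs then itens_diff k c r' i else tensor W k c r' i).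
Proof.
move=> nu_mu cs_mu nu_cs; have mu_nonleaf := nonleaf_of_proper T_tree nu_node nu_mu.
rewrite /itens_diff !itens_nonleaf // -sumrB; apply: eq_bigr => r' _.
rewrite zero_comp_free ?ancestor_not_comp // -mulrBr; congr (_ * _).
rewrite (bigD1 cs) // [X in _ - X](bigD1 cs) // [RHS](bigD1 cs) //= eqxx mulrBl.
congr (_ * _ - _ * _); apply: eq_bigr => c /andP[c_mu c_cs]; rewrite (negbTE c_cs) //.
apply: itens_comp_free (comp_free_disjoint _ nu_cs).
by apply: (children_disjoint T_tree c_mu cs_mu c_cs).
Qed.

Lemma subtree_prod_comp_free x : comp_free x ->
  subtree_prod del_scaled_wsq x = subtree_prod scaled_wsq x.
Proof.
move=> x_free; apply: eq_bigr => y /andP[_ yx].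
by rewrite /del_scaled_wsq (negbTE (x_free y yx)).
Qed.

Lemma sum_mean_sq_diff_nu_le k : (#|nu| <= k.+1)%N ->
  \sum_(q < prank D T Rk nu) mean_sq (itens_diff k.+1 nu q) <=
  sigma_sq * subtree_prod del_scaled_wsq nu.
Proof.
move=> nu_k.
have mean_sq_diff q : mean_sq (itens_diff k.+1 nu q) =
    W nu r q ^+ 2 * \prod_(c in children T nu) mean_sq (tensor W k c r).
  rewrite (eq_mean_sq (itens_diff_nu k q)) mean_sqZ.
  rewrite (mean_sq_prod i0 (F := fun c => tensor W k c r)) //.
    exact: trivIset_children.
  by move=> c _; apply: itens_depends.
under eq_bigr do rewrite mean_sq_diff.
rewrite -mulr_suml.
have del_nu : del_scaled_wsq nu = 1.
  by rewrite /del_scaled_wsq /comp_node eqxx node_dim_nonleaf // divr1.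
have del_child c : c \in children T nu -> del_scaled_wsq c = (node_dim c)^-1.
  by move=> cnu; rewrite /del_scaled_wsq /comp_node cnu orbT mul1r.
have -> : sigma_sq * subtree_prod del_scaled_wsq nu =
    (\sum_(j < prank D T Rk nu) W nu r j ^+ 2) *
    \prod_(c in children T nu)
      (col_sq c r / node_dim c * \prod_(c' in children T c) subtree_prod scaled_wsq c').
  rewrite subtree_prodE // del_nu mul1r /sigma_sq -mulrA -big_split /=.
  congr (_ * _); apply: eq_bigr => c cnu.
  rewrite subtree_prodE ?(child_node cnu) // del_child // mulrA; congr (_ * _).
  apply: eq_bigr => c' c'c; apply: subtree_prod_comp_free.
  exact: comp_free_grandchild c'c cnu.
apply: ler_wpM2l; first by apply: sumr_ge0 => j _; apply: sqr_ge0.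
apply: ler_prod => c cnu; rewrite mean_sq_ge0 mean_sq_itens_le ?(child_node cnu) //.
exact: leq_trans (proper_card (child_proper cnu)) nu_k.
Qed.

Lemma sum_mean_sq_diff_le k mu : mu \in T -> nu \subset mu -> (#|mu| <= k)%N ->
  \sum_(q < prank D T Rk mu) mean_sq (itens_diff k mu q) <=
  sigma_sq * subtree_prod del_scaled_wsq mu.
Proof.
elim: k mu => [|k IH] mu muT nu_mu mu_k.
  by move: mu_k; rewrite leqn0 cards_eq0 (negbTE (node_neq0 T_tree muT)).
have [nu_eq|nu_neq] := eqVneq nu mu; first by subst mu; apply: sum_mean_sq_diff_nu_le.
have nu_proper : nu \proper mu by rewrite properEneq nu_neq.
have mu_nonleaf := nonleaf_of_proper T_tree nu_node nu_proper.
have [cs cs_mu nu_cs] := exists_child nu_node nu_proper.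
have card_child c : c \in children T mu -> (#|c| <= k)%N.
  by move=> c_mu; apply: leq_trans (proper_card (child_proper c_mu)) mu_k.
rewrite subtree_prodE //.
have -> : del_scaled_wsq mu = scaled_wsq mu.
  by rewrite /del_scaled_wsq (negbTE (ancestor_not_comp nu_proper)).
rewrite mulrCA; apply: sum_mean_sq_le_scaled_wsq => q.
rewrite (eq_mean_sq (fun i => itens_diff_ancestor k q i nu_proper cs_mu nu_cs)).
apply: le_trans (mean_sq_sum_prod_le i0 _ cs_mu (trivIset_children T_tree mu) _) _.
  by move=> c r' _; case: eqP => _; [apply: itens_diff_depends | apply: itens_depends].
rewrite /col_sq /rank mu_nonleaf node_dim_nonleaf // divr1.
apply: ler_wpM2l; first by apply: sumr_ge0 => a _; apply: sqr_ge0.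
rewrite (bigD1 cs) // [X in _ <= _ * X](bigD1 cs) //= eqxx /= mulrA.
apply: ler_pM.
- by apply: sumr_ge0 => r' _; apply: mean_sq_ge0.
- by apply: prodr_ge0 => c _; apply: sumr_ge0 => r' _; apply: mean_sq_ge0.
- rewrite -(prank_child muT cs_mu mu_nonleaf).
  exact: IH (child_node cs_mu) nu_cs (card_child cs cs_mu).
apply: ler_prod => c /andP[c_mu c_cs]; rewrite (negbTE c_cs) /=.
rewrite sumr_ge0 => [|r' _]; last exact: mean_sq_ge0.
have c_free := comp_free_disjoint (children_disjoint T_tree c_mu cs_mu c_cs) nu_cs.
rewrite subtree_prod_comp_free // -(prank_child muT c_mu mu_nonleaf).
exact: sum_mean_sq_itens_le (child_node c_mu) (card_child c c_mu).
Qed.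

Lemma subtree_prod_del_root :
  subtree_prod del_scaled_wsq [set: 'I_N] * #|{: idx D}|%:R =
  \prod_(x in T :\: (nu |: children T nu)) wsq x.
Proof.
rewrite /subtree_prod (eq_bigl (mem T)) => [|x]; last by rewrite subsetT andbT.
rewrite -prod_node_dim /del_scaled_wsq big_split /= prodfV mulfVK; last first.
  by apply/prodf_neq0 => x _; rewrite gt_eqF ?node_dim_gt0.
rewrite (eq_bigr (fun x => if ~~ comp_node x then wsq x else 1)) => [|x _]; last first.
  by case: (comp_node x).
by rewrite -big_mkcondr; apply: eq_bigl => x; rewrite in_setD in_setU1 andbC.
Qed.

Lemma sum_sq_end_diff_le :
  \sum_(i : idx D) (end_tensor T Rk W i - end_tensor T Rk W' i) ^+ 2 <=
  sigma_sq * \prod_(x in T :\: (nu |: children T nu)) wsq x.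
Proof.
have root_card : (#|[set: 'I_N]| <= N)%N by rewrite cardsT card_ord.
have := sum_mean_sq_diff_le (root_node T_tree) (subsetT nu) root_card.
rewrite /prank parent_of_root big_ord1 => root_bound.
rewrite (sum_mean i0) -subtree_prod_del_root mulrA.
by apply: ler_wpM2r; first exact: ler0n.
Qed.

End ComponentRemoval.

End NodeBounds.

Section Norms.
Variables (N : nat) (R : rcfType) (D : 'I_N -> nat) (T : {set {set 'I_N}})
  (Rk : {set 'I_N} -> nat) (W : {set 'I_N} -> nat -> nat -> R).

Lemma wnorm_sq x : wnorm D T Rk W x ^+ 2 = wsq D T Rk W x.
Proof. by rewrite sqr_sqrtr // wsq_ge0. Qed.

Lemma sigma_loc_sq nu r : sigma_loc D T Rk W nu r ^+ 2 = sigma_sq D T Rk W nu r.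
Proof.
rewrite exprMn -prodrXl sqr_sqrtr ?sumr_ge0 // => [|j _]; last exact: sqr_ge0.
congr (_ * _); apply: eq_bigr => c _.
by rewrite sqr_sqrtr ?sumr_ge0 // => a _; apply: sqr_ge0.
Qed.

End Norms.

Theorem lemma15 (N : nat) (R : rcfType) (D : 'I_N -> nat)
  (T : {set {set 'I_N}}) (Rk : {set 'I_N} -> nat)
  (W : {set 'I_N} -> nat -> nat -> R) (nu : {set 'I_N}) (r : nat) :
  is_mode_tree T -> interior T nu -> (r < Rk nu)%N ->
  tnorm (fun i : idx D => end_tensor T Rk W i - end_tensor T Rk (zero_comp T W nu r) i)
  <= sigma_loc D T Rk W nu r *
     \prod_(nu' in T :\: (nu |: children T nu)) wnorm D T Rk W nu'.
Proof.
move=> T_tree nu_interior r_lt.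
have bound_ge0 : 0 <= sigma_loc D T Rk W nu r *
    \prod_(nu' in T :\: (nu |: children T nu)) wnorm D T Rk W nu'.
  apply: mulr_ge0; last by apply: prodr_ge0 => x _; apply: sqrtr_ge0.
  by apply: mulr_ge0; [apply: sqrtr_ge0 | apply: prodr_ge0 => c _; apply: sqrtr_ge0].
have [i0 _ | no_idx] := pickP (@predT (idx D)); last first.
  by rewrite /tnorm big1 ?sqrtr0 // => i; have := no_idx i.
rewrite /tnorm -(ger0_norm bound_ge0) -sqrtr_sqr ler_sqrt ?sqr_ge0 //.
rewrite exprMn sigma_loc_sq -prodrXl; under eq_bigr do rewrite wnorm_sq.
exact: sum_sq_end_diff_le.
Qed.
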